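(* Consider the Biased Preferential Attachment Model (BPAM) with two communities, minority ratio $r$ and homophily parameter $\rho$, with asymptotic red edge fraction $\alpha$ and quantities $q_{BB}, q_{RB}$ and $\tilde d^{in}_t(B)$ as defined in the context. For every integer $t \geq 2$ the multiplicative factors $MF^{(t)}(B) = q_{BB}\,\tilde d^{in}_t(B)$ and $MF^{(t)}(R) = q_{RB}\,\tilde d^{in}_t(B)$ satisfy $$MF^{(t)}(B) \geq MF^{(t)}(R)$$ for all $0 \leq r \leq 0.5$ and all $0 \leq \rho \leq 1$.
   Context: The BPAM with two communities (red $R$, blue $B$) grows a directed network one node at a time. A new node $u$ is labeled $R$ with probability $r$ and $B$ with probability $1-r$, where $0\le r\le 1/2$, so red is the minority. The node $u$ then picks a target $v$ with probability proportional to its current degree, $\mathbb{P}(v \text{ chosen}) = d_t(v)/\sum_{w} d_t(w)$. If $u$ and $v$ have the same label, the directed edge $(u,v)$ is created. If the labels differ, the edge is accepted with probability $\rho\in[0,1]$, and otherwise the choice is repeated until an edge is formed. This process is repeated $d$ times, so that every node has outdegree $d$. The network has $N$ nodes. Let $\alpha_N$ be the total degree of red nodes divided by the total degree $2Nd$, and let $\alpha=\lim_{N\to\infty}\mathbb{E}[\alpha_N]$. It is known that $\alpha<r$ (the power inequality). Define $$p^{out}_{RB}=\frac{\rho(1-\alpha)}{\alpha+\rho(1-\alpha)},\qquad p^{out}_{BB}=\frac{1-\alpha}{\rho\alpha+1-\alpha}.$$ Let $D_B=\frac{r\rho}{\alpha+\rho(1-\alpha)}+\frac{1-r}{\alpha\rho+1-\alpha}$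 and $D_R=\frac{r}{\alpha+\rho(1-\alpha)}+\frac{\rho(1-r)}{\alpha\rho+1-\alpha}$. Define $$p^{in}_{BB}=\frac{(1-r)/(\alpha\rho+1-\alpha)}{D_B},\qquad p^{in}_{BR}=\frac{\rho r/(\alpha+\rho(1-\alpha))}{D_B},$$ $$p^{in}_{RR}=\frac{r/(\alpha+\rho(1-\alpha))}{D_R},\qquad p^{in}_{RB}=\frac{\rho(1-r)/(\alpha\rho+1-\alpha)}{D_R}.$$ Set $$q_{BB}=p^{in}_{BB}p^{out}_{BB}+p^{in}_{BR}p^{out}_{RB},\qquad q_{RB}=p^{in}_{RB}p^{out}_{BB}+p^{in}_{RR}p^{out}_{RB}.$$ These are the probabilities that a node of color $B$ (respectively $R$) has an in-neighbor which in turn has an out-edge to a blue node. The size-biased $t$-th indegree moment of the blue community is $$\tilde d^{in}_t(B)=\frac{\sum_{u\in B}(d^{in}(u))^t}{\sum_{u\in B}d^{in}(u)}.$$ In the paper's mean-field analysis of HITS, the authority score after $t$ iterations is approximated by $a^{(t)}(v\in C)\approx d^{in}(v)(d-1)MF^{(t)}(C)$. Here the multiplicative factors are $MF^{(t)}(R)=q_{RB}\tilde d^{in}_t(B)$ and $MF^{(t)}(B)=q_{BB}\tilde d^{in}_t(B)$. *)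

From mathcomp Require Import all_boot all_order all_algebra.
Set Implicit Arguments. Unset Strict Implicit. Unset Printing Implicit Defensive.
Import Order.TTheory GRing.Theory Num.Theory.
Local Open Scope ring_scope.

Section BPAM.
Variable R : realFieldType.
Variables (r rho alpha : R).

Definition p_out_RB : R := rho * (1 - alpha) / (alpha + rho * (1 - alpha)).
Definition p_out_BB : R := (1 - alpha) / (rho * alpha + 1 - alpha).

Definition D_B : R :=
  r * rho / (alpha + rho * (1 - alpha)) + (1 - r) / (alpha * rho + 1 - alpha).
Definition D_R : R :=
  r / (alpha + rho * (1 - alpha)) + rho * (1 - r) / (alpha * rho + 1 - alpha).

Definition p_in_BB : R := ((1 - r) / (alpha * rho + 1 - alpha)) / D_B.
Definition p_in_BR : R := (rho * r / (alpha + rho * (1 - alpha))) / D_B.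
Definition p_in_RR : R := (r / (alpha + rho * (1 - alpha))) / D_R.
Definition p_in_RB : R := (rho * (1 - r) / (alpha * rho + 1 - alpha)) / D_R.

Definition q_BB : R := p_in_BB * p_out_BB + p_in_BR * p_out_RB.
Definition q_RB : R := p_in_RB * p_out_BB + p_in_RR * p_out_RB.
End BPAM.

(* Size-biased t-th indegree moment of the blue community, given the list
   of indegrees of the blue nodes: sum d^t / sum d. *)
Definition size_biased_moment (R : realFieldType) (t : nat) (degs : seq nat) : R :=
  (\sum_(d <- degs) (d%:R : R) ^+ t) / (\sum_(d <- degs) (d%:R : R)).

Definition MF_B (R : realFieldType) (r rho alpha : R) (t : nat) (degsB : seq nat) : R :=
  q_BB r rho alpha * size_biased_moment R t degsB.
Definition MF_R (R : realFieldType) (r rho alpha : R) (t : nat) (degsB : seq nat) : R :=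
  q_RB r rho alpha * size_biased_moment R t degsB.

(** Both [q_BB] and [q_RB] are weighted averages of the same two
    out-probabilities [p_out_BB >= p_out_RB]: with the in-weights
    [x = r / (alpha + rho (1 - alpha))] and [y = (1 - r) / (alpha rho + 1 - alpha)]
    of red and blue nodes, blue nodes weigh them as
    [y : rho x] and red nodes as [rho y : x].  Since [rho <= 1] the blue average
    puts relatively more weight on the larger value, so [q_RB <= q_BB]; the
    size-biased moment is a common nonnegative factor. *)

From mathcomp Require Import all_boot all_order all_algebra.
From mathcomp Require Import ring lra.
Import Order.TTheory GRing.Theory Num.Theory.
Local Open Scope ring_scope.

Lemma ler_weighted_mean (R : realFieldType) (a b c d P Q : R) :
  0 < a + b -> 0 < c + d -> Q <= P -> a * d <= c * b ->
  (a * P + b * Q) / (a + b) <= (c * P + d * Q) / (c + d).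
Proof.
move=> ab_gt0 cd_gt0 QP adcb.
rewrite ler_pdivrMr // mulrAC ler_pdivlMr // -subr_ge0.
have -> : (c * P + d * Q) * (a + b) - (a * P + b * Q) * (c + d)
          = (P - Q) * (c * b - a * d) :> R by ring.
by apply: mulr_ge0; rewrite subr_ge0.
Qed.

Section WeightedMeans.
Context {R : realFieldType} (r rho alpha : R).

Definition red_in_weight : R := r / (alpha + rho * (1 - alpha)).
Definition blue_in_weight : R := (1 - r) / (alpha * rho + 1 - alpha).

Lemma q_BB_weighted_mean :
  q_BB r rho alpha =
    (blue_in_weight * p_out_BB rho alpha + rho * red_in_weight * p_out_RB rho alpha)
    / (blue_in_weight + rho * red_in_weight).
Proof.
rewrite /q_BB /p_in_BB /p_in_BR.
have -> : D_B r rho alpha = blue_in_weight + rho * red_in_weight.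
  by rewrite /D_B /red_in_weight /blue_in_weight; ring.
rewrite /red_in_weight /blue_in_weight; ring.
Qed.

Lemma q_RB_weighted_mean :
  q_RB r rho alpha =
    (rho * blue_in_weight * p_out_BB rho alpha + red_in_weight * p_out_RB rho alpha)
    / (rho * blue_in_weight + red_in_weight).
Proof.
rewrite /q_RB /p_in_RB /p_in_RR.
have -> : D_R r rho alpha = rho * blue_in_weight + red_in_weight.
  by rewrite /D_R /red_in_weight /blue_in_weight; ring.
rewrite /red_in_weight /blue_in_weight; ring.
Qed.

End WeightedMeans.

Lemma p_out_RB_le_BB (R : realFieldType) (rho alpha : R) :
  0 <= rho -> rho <= 1 -> 0 <= alpha -> alpha < 1 ->
  p_out_RB rho alpha <= p_out_BB rho alpha.
Proof.
move=> rho_ge0 rho_le1 alpha_ge0 alpha_lt1.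
have B_gt0 : 0 < rho * alpha + 1 - alpha by nra.
have P_ge0 : 0 <= p_out_BB rho alpha by apply: divr_ge0; lra.
rewrite /p_out_RB; have [->|A_neq0] := eqVneq (alpha + rho * (1 - alpha)) 0.
  by rewrite invr0 mulr0.
have A_gt0 : 0 < alpha + rho * (1 - alpha) by rewrite lt0r A_neq0 /=; nra.
rewrite ler_pdivrMr // mulrAC ler_pdivlMr // -subr_ge0.
have -> : (1 - alpha) * (alpha + rho * (1 - alpha)) - rho * (1 - alpha) * (rho * alpha + 1 - alpha)
          = (1 - alpha) * alpha * (1 - rho ^+ 2) by ring.
have rho2_le1 : rho ^+ 2 <= 1 by rewrite expr_le1.
by apply: mulr_ge0; [apply: mulr_ge0 |]; lra.
Qed.

Lemma size_biased_moment_ge0 (R : realFieldType) (t : nat) (degs : seq nat) :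
  0 <= size_biased_moment R t degs.
Proof.
by apply: divr_ge0; apply: sumr_ge0 => d _; rewrite ?exprn_ge0.
Qed.

Theorem proposition1 (R : realFieldType) (r rho alpha : R) (t : nat)
    (degsB : seq nat) :
  0 <= r -> r <= 2^-1 -> 0 <= rho -> rho <= 1 ->
  0 <= alpha -> alpha < r ->
  (2 <= t)%N ->
  MF_R r rho alpha t degsB <= MF_B r rho alpha t degsB.
Proof.
move=> r_ge0 r_le_half rho_ge0 rho_le1 alpha_ge0 alpha_lt_r _.
have r_lt1 : r < 1 by apply: le_lt_trans r_le_half _; rewrite invf_lt1 ?ltr1n.
apply: ler_wpM2r; first exact: size_biased_moment_ge0.
rewrite q_RB_weighted_mean q_BB_weighted_mean.
set x := red_in_weight r rho alpha; set y := blue_in_weight r rho alpha.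
have x_ge0 : 0 <= x by apply: divr_ge0; nra.
have y_gt0 : 0 < y by apply: divr_gt0; nra.
have rho_y_ge0 : 0 <= rho * y by apply: mulr_ge0; lra.
have PQ : p_out_RB rho alpha <= p_out_BB rho alpha by apply: p_out_RB_le_BB; lra.
have := addr_ge0 rho_y_ge0 x_ge0.
rewrite le_eqVlt eq_sym => /predU1P[red_den0|red_den_gt0].
- (* Only when [alpha = rho = 0]: then [q_RB] is the junk value [0 / 0 = 0]. *)
  have x0 : x = 0 by lra.
  rewrite red_den0 invr0 mulr0 x0 !(mulr0, mul0r, addr0); apply: divr_ge0; last lra.
  by apply: mulr_ge0; [lra | apply: divr_ge0; nra].
- have weights : rho * y * (rho * x) <= y * x.
    rewrite mulrACA; apply: ler_piMl; first exact: mulr_ge0 (ltW y_gt0) x_ge0.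
    exact: mulr_ile1.
  by apply: ler_weighted_mean weights => //; nra.
Qed.
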